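(* Let $q=p^r$ with $p$ prime, $\theta(a)=a^{p^s}$ with $1\le s\le r-1$. Let $g(t)\in\mathbb{F}_q[t;\theta]$ have degree $k$ and be a right divisor of some monic polynomial of degree $n$ in $\mathbb{F}_q[t;\theta]$, and let $\mathscr{C}\subseteq\mathbb{F}_q^n$ be the skew $\theta$-module code generated by $g$, i.e. $\mathscr{C}=\{w\in\mathbb{F}_q[t;\theta]:\deg w<n,\ w=a(t)g(t)\text{ for some }a\}$. Let $\omega$ be a generator of $\mathbb{F}_{q^{[k]_s}}^*$. Suppose $$k\ge\log_{p^s}\Big[1+\Big(\frac{p^s-1}{r}\Big)\log_p\Big(\frac{(p^s)^n+p^s-2}{p^s-1}\Big)\Big],$$ and suppose there exist an integer $l\ge0$, an integer $c$ with $\gcd(c,q^{[k]_s}-1)=1$, and an integer $\Delta\ge2$ such that $g^{[]_s}(\omega^{l+ci})=0$ for $i=0,\dots,\Delta-2$. Then $d(\mathscr{C})\ge\Delta$.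
   Context: $\mathbb{F}_q[t;\theta]$ is the skew polynomial ring with $ta=\theta(a)t$; polynomials of degree $<n$ are identified with coefficient vectors in $\mathbb{F}_q^n$ and $d(\mathscr{C})$ is the minimum Hamming distance. For $i\ge0$, $[i]_s=\frac{(p^s)^i-1}{p^s-1}$. For $g(t)=\sum_ia_it^i$, $g^{[]_s}(x)=\sum_ia_ix^{[i]_s}\in\mathbb{F}_q[x]$ (commutative polynomial ring), evaluated at elements of the extension field $\mathbb{F}_{q^{[k]_s}}$. *)

From Stdlib Require Import Reals.
From HB Require Import structures.
From mathcomp Require Import all_boot all_order all_algebra all_field.
Set Implicit Arguments. Unset Strict Implicit. Unset Printing Implicit Defensive.
Import GRing.Theory.
Local Open Scope ring_scope.

Definition frob_theta (F : finFieldType) (p s : nat) (a : F) : F := a ^+ (p ^ s).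

(* Skew polynomials over F are represented by their coefficient sequences
   ({poly F}); multiplication in F[t;theta] with  t a = theta(a) t :
   (sum_i a_i t^i)(sum_j b_j t^j) = sum_{i,j} a_i theta^i(b_j) t^(i+j). *)
Definition skew_mul (F : finFieldType) (theta : F -> F) (u v : {poly F}) : {poly F} :=
  \poly_(m < (size u + size v).-1)
     \sum_(i < m.+1) u`_i * iter i theta (v`_(m - i)).

Definition qbracket (p s i : nat) : nat := ((p ^ s) ^ i - 1) %/ (p ^ s - 1).

Definition linearized_eval (F L : finFieldType) (f : {rmorphism F -> L})
  (p s : nat) (g : {poly F}) (x : L) : L :=
  \sum_(i < size g) f g`_i * x ^+ qbracket p s i.

Definition skew_code (F : finFieldType) (theta : F -> F) (n : nat) (g : {poly F})
  (w : {poly F}) : Prop :=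
  (size w <= n)%N /\ exists a : {poly F}, w = skew_mul theta a g.

Definition hamming (F : finFieldType) (n : nat) (w1 w2 : {poly F}) : nat :=
  #|[set i : 'I_n | w1`_i != w2`_i]|.

Definition min_dist_ge (F : finFieldType) (n : nat) (C : {poly F} -> Prop) (D : nat) : Prop :=
  forall w1 w2, C w1 -> C w2 -> w1 != w2 -> (D <= hamming n w1 w2)%N.

Local Close Scope ring_scope.

Definition k_lower_bound (p r s n : nat) : R :=
  Rdiv
    (ln (Rplus R1
       (Rmult (Rdiv (Rminus (INR (p ^ s)) R1) (INR r))
          (Rdiv (ln (Rdiv (Rminus (Rplus (INR ((p ^ s) ^ n)) (INR (p ^ s))) (IZR 2))
                          (Rminus (INR (p ^ s)) R1)))
                (ln (INR p))))))
    (ln (INR (p ^ s))).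

(* Every codeword is a left multiple [a g] in the skew ring, and linearized
   evaluation turns left multiplication into
   [Phi(a g)(x) = sum_i a_i x^[i]_s Phi(g)(x)^(p^(s i))],
   so the roots [omega^(l + c i)] of [g^[]_s] are roots of the linearized
   polynomial of every codeword.  For the difference [w] of two codewords this
   reads [sum_j w_j omega^(l [j]_s) zeta^([j]_s t) = 0] for [t <= Delta - 2],
   where [zeta = omega^c] is again primitive.  The lower bound on [k] gives
   [[n]_s < q^[k]_s], so the nodes [zeta^[j]_s], [j < n], are distinct, and if
   fewer than [Delta] coefficients of [w] were nonzero this Vandermonde system
   would force [w = 0]. *)

From Stdlib Require Import Reals Lra.
From HB Require Import structures.
From mathcomp Require Import all_boot all_order all_algebra all_field.
From mathcomp Require Import zify.
Set Implicit Arguments.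
Unset Strict Implicit.
Unset Printing Implicit Defensive.
Import GRing.Theory.
Local Open Scope ring_scope.

Section QBracket.
Variables p s : nat.
Hypothesis pXs_gt1 : (1 < p ^ s)%N.

Lemma qbracketE i : qbracket p s i = (\sum_(j < i) (p ^ s) ^ j)%N.
Proof. by rewrite /qbracket subn1 predn_exp subn1 mulKn // -subn1 subn_gt0. Qed.

Lemma expn_qbracket i : ((p ^ s) ^ i)%N = ((p ^ s).-1 * qbracket p s i).+1.
Proof. by rewrite qbracketE -predn_exp prednK // expn_gt0 ltnW. Qed.

Lemma qbracketD i j :
  qbracket p s (i + j) = (qbracket p s i + (p ^ s) ^ i * qbracket p s j)%N.
Proof.
rewrite !qbracketE big_split_ord /= big_distrr /=.
by congr (_ + _)%N; apply: eq_bigr => m _; rewrite expnD.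
Qed.

Lemma qbracketS i : qbracket p s i.+1 = (qbracket p s i + (p ^ s) ^ i)%N.
Proof. by rewrite !qbracketE big_ord_recr. Qed.

Lemma ltn_qbracket : {mono qbracket p s : i j / (i < j)%N}.
Proof.
apply/leqW_mono/leq_mono; apply: homo_ltn => [|i]; first exact: ltn_trans.
by rewrite qbracketS -{1}[qbracket p s i]addn0 ltn_add2l expn_gt0 (ltnW pXs_gt1).
Qed.

Lemma qbracket_inj : injective (qbracket p s).
Proof. by apply/incn_inj/leq_mono => i j; rewrite ltn_qbracket. Qed.
End QBracket.

Section KLowerBound.
Local Open Scope R_scope.

Lemma INR_expn m e : INR (m ^ e) = INR m ^ e.
Proof. by elim: e => // e IHe; rewrite expnS -multE mult_INR IHe. Qed.

Lemma INR_expn_qbracket p s e : (1 < p ^ s)%N ->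
  INR (p ^ s) ^ e = INR (p ^ s).-1 * INR (qbracket p s e) + 1.
Proof. by move=> pXs_gt1; rewrite -INR_expn expn_qbracket // S_INR mult_INR. Qed.

Lemma le_pow_of_ln_div (a x : R) (m : nat) :
  1 < a -> 0 < x -> ln x / ln a <= INR m -> x <= a ^ m.
Proof.
move=> a_gt1 x_gt0 le_m.
have ln_a : 0 < ln a by rewrite -ln_1; apply: ln_increasing; lra.
have : ln x <= ln (a ^ m).
  rewrite ln_pow; last lra.
  have := Rmult_le_compat_r _ _ _ (Rlt_le _ _ ln_a) le_m.
  by rewrite /Rdiv Rmult_assoc Rinv_l ?Rmult_1_r; lra.
case: (Rle_or_lt x (a ^ m)) => // lt_x => /Rle_not_lt[].
by apply: ln_increasing; first apply: pow_lt; lra.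
Qed.

(* The argument of the outer logarithm is [1 + (p^s - 1)/r * log_p([n]_s + 1)],
   because [((p^s)^n + p^s - 2)/(p^s - 1) = [n]_s + 1]. *)
Lemma k_lower_boundE p r s n : (1 < p ^ s)%N ->
  k_lower_bound p r s n =
  ln (1 + INR (p ^ s).-1 / INR r * (ln (INR (qbracket p s n) + 1) / ln (INR p)))
  / ln (INR (p ^ s)).
Proof.
move=> pXs_gt1.
have pXsE : INR (p ^ s) = INR (p ^ s).-1 + 1 by rewrite -S_INR prednK // ltnW.
rewrite /k_lower_bound (INR_expn (p ^ s) n) INR_expn_qbracket // pXsE.
set d := INR (p ^ s).-1; set Qn := INR (qbracket p s n).
have d_gt0 : 0 < d by apply/lt_0_INR/ltP; rewrite -subn1 subn_gt0.
have -> : d + 1 - R1 = d by ring.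
by have -> : (d * Qn + 1 + (d + 1) - 2) / d = Qn + 1 by field; lra.
Qed.

Lemma qbracket_lt_of_k_lower_bound p r s n k :
  prime p -> (0 < s)%N -> (0 < r)%N -> k_lower_bound p r s n <= INR k ->
  (qbracket p s n < (p ^ r) ^ qbracket p s k)%N.
Proof.
move=> p_prime s_gt0 r_gt0; have p_gt1 := prime_gt1 p_prime.
have pXs_gt1 : (1 < p ^ s)%N by rewrite -{1}(expn0 p) ltn_exp2l.
rewrite k_lower_boundE //.
set d := INR (p ^ s).-1; set Qn := INR (qbracket p s n); set Qk := INR (qbracket p s k).
set y := ln (Qn + 1) / ln (INR p) => hk.
have d_gt0 : 0 < d by apply/lt_0_INR/ltP; rewrite -subn1 subn_gt0.
have p_gt1R : 1 < INR p by apply/lt_1_INR/ltP.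
have r_gt0R : 0 < INR r by apply/lt_0_INR/ltP.
have Qn_ge0 : 0 <= Qn by apply: pos_INR.
have ln_p : 0 < ln (INR p) by rewrite -ln_1; apply: ln_increasing; lra.
have y_ge0 : 0 <= y.
  apply: Rmult_le_pos; last exact/Rlt_le/Rinv_0_lt_compat.
  case: (Rle_lt_or_eq_dec 0 Qn Qn_ge0) => [Qn_gt0|<-]; last by rewrite Rplus_0_l ln_1; lra.
  by rewrite -ln_1; apply/Rlt_le/ln_increasing; lra.
have : 1 + d / INR r * y <= d * Qk + 1.
  rewrite -INR_expn_qbracket //; apply: le_pow_of_ln_div => //.
    by apply/lt_1_INR/ltP.
  suff : 0 <= d / INR r * y by lra.
  by apply: Rmult_le_pos => //; apply: Rmult_le_pos; [lra | apply/Rlt_le/Rinv_0_lt_compat].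
move=> le_y; have : y <= INR (r * qbracket p s k).
  rewrite mult_INR -/Qk; apply: (Rmult_le_reg_l (d / INR r)).
    exact: Rdiv_lt_0_compat.
  by rewrite (_ : d / INR r * (INR r * Qk) = d * Qk); [lra | field; lra].
have Qn1_gt0 : 0 < Qn + 1 by lra.
move=> /(le_pow_of_ln_div p_gt1R Qn1_gt0).
by rewrite -INR_expn -expnM -S_INR => /INR_le/leP.
Qed.
End KLowerBound.

Lemma sum_antidiagonal (R : nmodType) (f : nat -> nat -> R) N :
  \sum_(m < N) \sum_(i < m.+1) f i (m - i)%N = \sum_(i < N) \sum_(j < N - i) f i j.
Proof.
elim: N => [|N IHN]; first by rewrite !big_ord0.
rewrite big_ord_recr /= IHN [in LHS]big_ord_recr [in RHS]big_ord_recr /=.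
rewrite subnn subSnn big_ord1 addrA -big_split /=; congr (_ + _).
by apply: eq_bigr => i _; rewrite subSn ?big_ord_recr // ltnW.
Qed.

Lemma exprXn_sum_pchar (R : comNzRingType) (p e : nat) (I : Type) (r : seq I)
    (P : pred I) (f : I -> R) : p \in [pchar R] ->
  (\sum_(i <- r | P i) f i) ^+ (p ^ e) = \sum_(i <- r | P i) f i ^+ (p ^ e).
Proof.
move=> pcharR; have p_pr := pcharf_prime pcharR.
apply: (big_morph (fun x => x ^+ (p ^ e))) => [x y|].
  by apply: exprDn_pchar; rewrite pnatX (pnatE _ p_pr) pcharR.
by rewrite expr0n expn_eq0 eqn0Ngt prime_gt0.
Qed.

Lemma coef_skew_mul (K : finFieldType) (theta : K -> K) (u v : {poly K}) m :
  theta 0 = 0 ->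
  (skew_mul theta u v)`_m = \sum_(i < m.+1) u`_i * iter i theta v`_(m - i).
Proof.
move=> theta0; rewrite coef_poly; case: ltnP => // uv_le_m.
apply/esym/big1 => i _; have [u_i | ] := ltnP i (size u); last first.
  by move=> u_le_i; rewrite nth_default ?mul0r.
rewrite [v`_ _]nth_default ?iter_fix ?mulr0 //.
(* [set] merges the syntactically different elaborations of [size u] for [lia]. *)
move: uv_le_m; rewrite -subn1 leq_subLR; set su := size u; set sv := size v; lia.
Qed.

Section LinearizedEval.
Variables (F L : finFieldType) (emb : {rmorphism F -> L}) (p s : nat).
Hypotheses (pcharF : p \in [pchar F]) (s_gt0 : (0 < s)%N).

Local Notation theta := (frob_theta p s).
Local Notation lin_eval := (linearized_eval emb p s).

Let p_prime : prime p := pcharf_prime pcharF.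

Let pXs_gt1 : (1 < p ^ s)%N.
Proof. by rewrite -{1}(expn0 p) ltn_exp2l ?prime_gt1. Qed.

Let theta0 : theta (0 : F) = 0.
Proof. by rewrite /frob_theta expr0n expn_eq0 eqn0Ngt prime_gt0. Qed.

Lemma iter_frob_theta i (x : F) : iter i theta x = x ^+ ((p ^ s) ^ i).
Proof. by elim: i => [|i IHi] /=; rewrite ?expr1 // IHi /frob_theta -exprM expnSr. Qed.

Lemma linearized_eval_widen N (g : {poly F}) (x : L) : (size g <= N)%N ->
  lin_eval g x = \sum_(i < N) emb g`_i * x ^+ qbracket p s i.
Proof.
move=> szg; pose h i := emb g`_i * x ^+ qbracket p s i.
rewrite /linearized_eval (big_ord_widen N h szg) big_mkcond.
by apply: eq_bigr => i _; case: ltnP => // gi; rewrite nth_default ?rmorph0 ?mul0r.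
Qed.

Lemma linearized_eval_skew_mul (a g : {poly F}) (x : L) :
  lin_eval (skew_mul theta a g) x =
  \sum_(i < size a) emb a`_i * x ^+ qbracket p s i * lin_eval g x ^+ ((p ^ s) ^ i).
Proof.
have pcharL := rmorph_pchar emb pcharF.
set N := (size a + size g)%N.
rewrite (@linearized_eval_widen N) ?(leq_trans (size_poly _ _)) ?leq_pred //.
pose f i j := emb (a`_i * iter i theta g`_j) * x ^+ qbracket p s (i + j).
transitivity (\sum_(m < N) \sum_(i < m.+1) f i (m - i)%N).
  apply: eq_bigr => m _; rewrite coef_skew_mul //.
  rewrite rmorph_sum mulr_suml; apply: eq_bigr => i _.
  by rewrite /f /= subnKC // -ltnS.
pose h i := emb a`_i * x ^+ qbracket p s i * lin_eval g x ^+ ((p ^ s) ^ i).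
rewrite sum_antidiagonal (big_ord_widen N h (leq_addr _ _)) [RHS]big_mkcond.
apply: eq_bigr => i _; case: ltnP => a_i; last first.
  by apply: big1 => j _; rewrite /f /= nth_default // mul0r rmorph0 mul0r.
rewrite /h (@linearized_eval_widen (N - i)); last by rewrite /N -addnBAC ?leq_addl // ltnW.
rewrite -expnM exprXn_sum_pchar // expnM mulr_sumr; apply: eq_bigr => j _.
by rewrite /f /= rmorphM iter_frob_theta rmorphXn qbracketD // exprD exprMn -exprM mulnC
  -!mulrA; congr (_ * _); rewrite mulrCA.
Qed.

Lemma linearized_eval_skew_mul_eq0 (a g : {poly F}) (x : L) :
  lin_eval g x = 0 -> lin_eval (skew_mul theta a g) x = 0.
Proof.
move=> gx0; rewrite linearized_eval_skew_mul gx0; apply: big1 => i _.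
by rewrite expr0n expn_eq0 eqn0Ngt (ltnW pXs_gt1) mulr0.
Qed.

Lemma skew_code_linearized_root n (g w : {poly F}) (x : L) :
  skew_code theta n g w -> lin_eval g x = 0 ->
  \sum_(i < n) emb w`_i * x ^+ qbracket p s i = 0.
Proof.
case=> szw [a wE] gx0.
by rewrite -linearized_eval_widen // wE linearized_eval_skew_mul_eq0.
Qed.
End LinearizedEval.

Section PowerSums.
Variables (K : fieldType) (I : finType) (J : {set I}) (u z : I -> K).
Hypothesis power_sums0 : forall t, (t < #|J|)%N -> \sum_(j in J) u j * z j ^+ t = 0.

Lemma power_sums_horner_eq0 (P : {poly K}) :
  (size P <= #|J|)%N -> \sum_(j in J) u j * P.[z j] = 0.
Proof.
move=> szP; under eq_bigr do rewrite horner_coef mulr_sumr.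
rewrite exchange_big big1 //= => t _.
under eq_bigr do rewrite mulrCA.
by rewrite -mulr_sumr power_sums0 ?mulr0 // (leq_trans _ szP).
Qed.

Lemma power_sums_coefs_eq0 : {in J &, injective z} -> {in J, forall j, u j = 0}.
Proof.
move=> z_inj j0 Jj0; pose P := \prod_(j in J :\ j0) ('X - (z j)%:P).
have szP : size P = #|J|.
  by rewrite /P -big_enum size_prod_XsubC -cardE (cardsD1 j0 J) Jj0.
have Pz0 : P.[z j0] != 0.
  rewrite horner_prod; apply/prodf_neq0 => j.
  rewrite !inE hornerXsubC subr_eq0 => /andP[jj0 Jj].
  by apply: contra jj0 => /eqP /z_inj -> //; rewrite eqxx.
have := @power_sums_horner_eq0 P (eq_leq szP).
rewrite (bigD1 j0) //= big1 => [|j /andP[Jj jj0]]; last first.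
  rewrite horner_prod (bigD1 j) /=; last by rewrite !inE jj0.
  by rewrite hornerXsubC subrr mul0r mulr0.
by rewrite addr0 => /eqP; rewrite mulf_eq0 (negPf Pz0) orbF => /eqP.
Qed.
End PowerSums.

Lemma prim_root_neq0 (R : nzRingType) (N : nat) (z : R) :
  N.-primitive_root z -> z != 0.
Proof.
move=> prim_z; apply/eqP=> z0; have := prim_expr_order prim_z.
by rewrite z0 expr0n eqn0Ngt (prim_order_gt0 prim_z) => /eqP; rewrite eq_sym oner_eq0.
Qed.

Lemma prim_root_exprz (K : fieldType) (N : nat) (z : K) (c : int) :
  N.-primitive_root z -> coprimez c N -> N.-primitive_root (z ^ c).
Proof.
move=> prim_z cop; have N_gt0 := prim_order_gt0 prim_z.
have z0 := prim_root_neq0 prim_z.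
rewrite (divz_eq c N) expfzDr // -exprz_exp exprzAC -exprnP prim_expr_order // exp1rz mul1r.
rewrite -[(_ %% _)%Z]gez0_abs ?modz_ge0 ?eqz_nat -?lt0n // -exprnP prim_root_exp_coprime //.
by rewrite -[X in coprime _ X]/`|N%:Z|%N -coprimezE /coprimez gcdz_modl.
Qed.

Theorem mainTheorem11
  (p r s : nat) (F : finFieldType)
  (hp : prime p) (hq : #|F| = (p ^ r)%N)
  (hs1 : (1 <= s)%N) (hs2 : (s <= r - 1)%N)
  (n k : nat) (g : {poly F})
  (hdeg : size g = k.+1)
  (hdiv : exists h fpol : {poly F},
            fpol \is monic /\ size fpol = n.+1 /\
            fpol = skew_mul (frob_theta p s) h g)
  (L : finFieldType) (emb : {rmorphism F -> L})
  (hL : #|L| = (#|F| ^ qbracket p s k)%N)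
  (omega : L) (homega : (#|L|).-1.-primitive_root omega)
  (hk : Rle (k_lower_bound p r s n) (INR k))
  (l : nat) (c : int) (Delta : nat)
  (hc : coprimez c ((#|F| ^ qbracket p s k).-1)%:Z)
  (hDelta : (2 <= Delta)%N)
  (hroots : forall i : nat, (i <= Delta - 2)%N ->
     linearized_eval emb p s g (omega ^ (l%:Z + c * i%:Z)) = 0) :
  min_dist_ge n (skew_code (frob_theta p s) n g) Delta.
Proof.
have pcharF : p \in [pchar F] := card_finPcharP hq hp.
have pXs_gt1 : (1 < p ^ s)%N by rewrite -{1}(expn0 p) ltn_exp2l ?prime_gt1.
have omega0 := prim_root_neq0 homega.
have zeta_prim : (#|L|.-1).-primitive_root (omega ^ c).
  by apply: (prim_root_exprz (c := c) homega); rewrite hL.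
have qb_lt_N m : (m < n)%N -> (qbracket p s m < #|L|.-1)%N.
  move=> m_lt_n; rewrite (leq_trans (_ : _ < qbracket p s n)%N) ?ltn_qbracket //.
  rewrite hL hq -ltnS prednK ?expn_gt0 ?prime_gt0 //.
  exact: qbracket_lt_of_k_lower_bound hp hs1 (leq_trans hs1 (leq_trans hs2 (leq_subr 1 r))) hk.
move=> w1 w2 Cw1 Cw2 w1_neq_w2; rewrite /hamming leqNgt; apply/negP => small.
set J := [set i : 'I_n | w1`_i != w2`_i] in small.
pose u (i : 'I_n) := emb (w1 - w2)`_i * (omega ^+ l) ^+ qbracket p s i.
pose z (i : 'I_n) := (omega ^ c) ^+ qbracket p s i.
have z_inj : {in J &, injective z}.
  move=> i j _ _ /eqP; rewrite (eq_prim_root_expr zeta_prim) !modn_small ?qb_lt_N //.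
  by move=> /eqP/(qbracket_inj pXs_gt1)/val_inj.
have sums0 t : (t < #|J|)%N -> \sum_(j in J) u j * z j ^+ t = 0.
  move=> t_lt_J; set x := omega ^ (l%:Z + c * t%:Z).
  have x_root : linearized_eval emb p s g x = 0 by apply: hroots; lia.
  have xE m : x ^+ m = (omega ^+ l) ^+ m * ((omega ^ c) ^+ m) ^+ t.
    by rewrite /x expfzDr // -exprz_exp -!exprnP exprMn [_ ^+ t ^+ m]exprAC.
  transitivity (\sum_(i < n) emb (w1 - w2)`_i * x ^+ qbracket p s i).
    rewrite big_mkcond; apply: eq_bigr => i _; rewrite inE xE mulrA.
    by case: ifPn => // /negPn/eqP w12i; rewrite coefB w12i subrr rmorph0 !mul0r.
  under eq_bigr do rewrite coefB rmorphB mulrBl.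
  by rewrite sumrB !(skew_code_linearized_root pcharF hs1 _ x_root) ?subrr.
have u0 := power_sums_coefs_eq0 sums0 z_inj.
apply/negP: w1_neq_w2; apply/negPn/eqP/polyP => m.
have [m_lt_n | n_le_m] := ltnP m n; last first.
  case: Cw1 Cw2 => sz_w1 _ [sz_w2 _].
  by rewrite !nth_default ?(leq_trans sz_w1) ?(leq_trans sz_w2).
apply/eqP; apply: contraT => w12m.
have := u0 (Ordinal m_lt_n); rewrite inE => /(_ w12m) /eqP.
rewrite mulf_eq0 (negPf (expf_neq0 _ (expf_neq0 _ omega0))) orbF.
by rewrite fmorph_eq0 coefB subr_eq0 (negPf w12m).
Qed.
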